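(* Let $P(x)=a_nx^n+a_{n-1}x^{n-1}+\cdots+a_1x$ with integer coefficients $a_i\ge 0$, $a_n\ne 0$, and $\gcd(a_n,\dots,a_1)=1$. For integers $0<t<a$ define $m_{a,t}=\dfrac{P(a)}{\gcd(P(a),P(t))}$. Then \[ \mathsf{dens}(\mathcal{L}(a_n,\dots,a_1))=\lim_{N\to\infty}\frac{\displaystyle\sum_{a=1}^{N}\ \sum_{J\subseteq\{1,\dots,a-1\}}(-1)^{|J|}\left\lfloor\frac{N}{\operatorname{lcm}(m_{a,t}:t\in J)}\right\rfloor}{N^2}. \]
   Context: $\mathbb{N}$ denotes the positive integers; $\operatorname{lcm}$ over the empty set is $1$. The family $\mathcal{F}(a_n,\dots,a_1)=\{y=q(a_nx^n+\cdots+a_1x): q\in\mathbb{Q}^+\}$. A point $(r,s)\in\mathbb{N}^2$ is $\mathcal{F}(a_n,\dots,a_1)$-visible if there is $q\in\mathbb{Q}^+$ with $s=q(a_nr^n+\cdots+a_1r)$ and no other point of $\mathbb{N}^2$ lies on the curve $y=q(a_nx^n+\cdots+a_1x)$ between the origin and $(r,s)$; $\mathcal{L}(a_n,\dots,a_1)$ is the set of all such points. For $S\subseteq\mathbb{N}^2$, $\mathsf{dens}(S)=\lim_{N\to\infty}|S\cap R_N|/N^2$ (when the limit exists), where $R_N=\{(x,y)\in\mathbb{Z}^2:1\le x,y\le N\}$. *)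

From HB Require Import structures.
From mathcomp Require Import all_boot all_order all_algebra.
From mathcomp Require Import all_classical all_reals all_analysis.
Set Implicit Arguments. Unset Strict Implicit. Unset Printing Implicit Defensive.
Import Order.TTheory GRing.Theory Num.Theory.

Definition polyP (n : nat) (a : nat -> nat) (x : nat) : nat :=
  \sum_(1 <= i < n.+1) a i * x ^ i.

(* (r,s) in N^2 (positive integers) is F(a_n,...,a_1)-visible: there is a
   positive rational q with s = q P(r) and no other point (x,y) of N^2 on
   y = q P(x) strictly between the origin and (r,s), i.e. with 0 < x < r. *)
Definition visible (n : nat) (a : nat -> nat) (r s : nat) : Prop :=
  (0 < r)%N /\ (0 < s)%N /\
  exists q : rat, (0 < q)%R /\ (s%:R = q * (polyP n a r)%:R)%R /\
    forall x y : nat, (0 < x)%N -> (0 < y)%N -> (x < r)%N ->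
      (y%:R <> q * (polyP n a x)%:R)%R.

Definition count_visible (n : nat) (a : nat -> nat) (N : nat) : nat :=
  \sum_(1 <= r < N.+1) \sum_(1 <= s < N.+1) (`[< visible n a r s >] : nat).

Definition m_at (n : nat) (a : nat -> nat) (b t : nat) : nat :=
  polyP n a b %/ gcdn (polyP n a b) (polyP n a t).

Definition incl_excl_sum (R : realType) (n : nat) (a : nat -> nat) (N : nat) : R :=
  \sum_(1 <= b < N.+1)
     \sum_(J : {set 'I_b} | [forall t in J, (0 < val t)%N])
        ((-1) ^+ #|J| * (N %/ \big[lcmn/1%N]_(t in J) m_at n a b (val t))%:R)%R.

From Pilot Require Import Defs.
From HB Require Import structures.
From mathcomp Require Import all_boot all_order all_algebra.
From mathcomp Require Import all_classical all_reals all_analysis.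
Import Order.TTheory GRing.Theory Num.Theory numFieldNormedType.Exports.
Local Open Scope classical_set_scope.
Local Open Scope ring_scope.

(** The two sequences agree term by term.  The only curve of the family through
    (r, s) is y = s P(x) / P(r), and it meets an integer point (t, y) with
    0 < t < r exactly when P(r) | s P(t), i.e. when m_{r,t} | s.  So the
    visible points of column r in R_N are the s <= N divisible by none of the
    m_{r,t}, and inclusion-exclusion over the set J of divisibilities that do
    hold counts them as the inner sum of floor(N / lcm). *)

Lemma dvdn_divn_gcd A B s : (0 < A)%N ->
  (A %/ gcdn A B %| s)%N = (A %| s * B)%N.
Proof.
move=> A_gt0; have g_gt0 : (0 < gcdn A B)%N by rewrite gcdn_gt0 A_gt0.
rewrite -(@dvdn_pmul2r (gcdn A B)) // divnK ?dvdn_gcdl // muln_gcdr.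
apply/idP/idP => [/dvdn_trans-> // | dvd_A]; first exact: dvdn_gcdr.
by rewrite dvdn_gcd dvd_A dvdn_mull.
Qed.

Lemma prodr_nat_of_bool (R : comPzSemiRingType) (T : finType) (P c : pred T) :
  \prod_(t | P t) (c t)%:R = [forall (t | P t), c t]%:R :> R.
Proof.
have [all_c | ] := boolP [forall (t | P t), c t].
  by rewrite big1 // => t Pt; rewrite (forall_inP all_c).
rewrite negb_forall => /existsP[t]; rewrite negb_imply => /andP[Pt not_ct].
by rewrite (bigD1 t Pt) /= (negbTE not_ct) mul0r.
Qed.

Lemma natr_forall_negb (R : comPzRingType) (T : finType) (c : pred T) :
  [forall t, ~~ c t]%:R =
  \sum_(J : {set T}) (-1) ^+ #|J| * [forall t in J, c t]%:R :> R.
Proof.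
have -> : [forall t, ~~ c t]%:R = \prod_t (- (c t)%:R + 1) :> R.
  rewrite -(prodr_nat_of_bool _ _ xpredT); apply: eq_bigr => t _.
  by case: (c t); rewrite ?addNr ?oppr0 ?add0r.
rewrite bigA_distr; apply: eq_bigr => J _.
by rewrite -big_mkcond prodrN prodr_nat_of_bool.
Qed.

Lemma sum_forall_ndvdn (R : comPzRingType) (T : finType) (P : pred T)
    (m : T -> nat) N :
  (\sum_(1 <= s < N.+1) [forall t, P t ==> ~~ (m t %| s)%N])%:R =
  \sum_(J : {set T} | [forall t in J, P t])
     (-1) ^+ #|J| * (N %/ \big[lcmn/1%N]_(t in J) m t)%:R :> R.
Proof.
have forall_ndvdE s : [forall t, P t ==> ~~ (m t %| s)%N] =
                      [forall t, ~~ (P t && (m t %| s)%N)].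
  by apply: eq_forallb => t; rewrite negb_and implybE.
have forall_dvdE s (J : {set T}) : [forall t in J, P t && (m t %| s)%N] =
    [forall t in J, P t] && (\big[lcmn/1%N]_(t in J) m t %| s)%N.
  apply/forall_inP/andP => [all_dvd | [/forall_inP P_J /dvdn_biglcmP dvd_s] t tJ].
    split; first by apply/forall_inP => t /all_dvd/andP[].
    by apply/dvdn_biglcmP => t /all_dvd/andP[].
  by rewrite P_J ?dvd_s.
rewrite natr_sum; under eq_bigr => s _ do rewrite forall_ndvdE natr_forall_negb.
rewrite exchange_big [RHS]big_mkcond /=; apply: eq_bigr => J _.
under eq_bigr => s _ do rewrite forall_dvdE.
rewrite -mulr_sumr; case: ifP => P_J; last by rewrite big1 ?mulr0.
by rewrite -natr_sum divn_count_dvd.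
Qed.

Section Visibility.

Variables (n : nat) (a : nat -> nat).
Hypotheses (n_gt0 : (0 < n)%N) (an_gt0 : (0 < a n)%N).

Lemma polyP_gt0 {x} : (0 < x)%N -> (0 < Defs.polyP n a x)%N.
Proof.
move=> x_gt0; rewrite /Defs.polyP big_nat_recr //=.
by rewrite addn_gt0 muln_gt0 an_gt0 expn_gt0 x_gt0 orbT.
Qed.

Lemma visibleP {r s} : (0 < r)%N -> (0 < s)%N ->
  visible n a r s <-> [forall t : 'I_r, (0 < t)%N ==> ~~ (m_at n a r t %| s)%N].
Proof.
move=> r_gt0 s_gt0.
have Pr_gt0 := polyP_gt0 r_gt0.
have Pr_neq0 : (Defs.polyP n a r)%:R != 0 :> rat by rewrite pnatr_eq0 -lt0n.
have m_atE t : (m_at n a r t %| s)%N = (Defs.polyP n a r %| s * Defs.polyP n a t)%N.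
  exact: dvdn_divn_gcd.
split=> [[_ [_ [q [_ [sE no_point]]]]] | /forallP no_dvd].
  have qE : q = s%:R / (Defs.polyP n a r)%:R by rewrite sE mulfK.
  apply/forallP => t; apply/implyP => t_gt0; rewrite m_atE; apply/negP => dvd_r.
  have Pt_gt0 := polyP_gt0 t_gt0.
  pose y := (s * Defs.polyP n a t %/ Defs.polyP n a r)%N.
  apply: (no_point t y t_gt0 _ (ltn_ord t)).
    by rewrite divn_gt0 // dvdn_leq // muln_gt0 s_gt0 Pt_gt0.
  apply: (mulIf Pr_neq0).
  by rewrite -natrM divnK // natrM qE mulrAC mulfVK.
do 2 split => //; exists (s%:R / (Defs.polyP n a r)%:R).
split; first by rewrite divr_gt0 // ltr0n.
split=> [|x y x_gt0 _ x_lt_r yE]; first by rewrite mulfVK.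
move: (no_dvd (Ordinal x_lt_r)); rewrite /= x_gt0 m_atE /=.
apply/negP/negPn/dvdnP; exists y; apply/eqP.
by rewrite -(eqr_nat rat) !natrM yE mulrAC mulfVK.
Qed.

Lemma count_visibleE (R : realType) N :
  (count_visible n a N)%:R = incl_excl_sum R n a N.
Proof.
rewrite /count_visible /incl_excl_sum natr_sum; apply: eq_big_nat => r /andP[r_gt0 _].
rewrite -sum_forall_ndvdn; congr _%:R; apply: eq_big_nat => s /andP[s_gt0 _].
by rewrite (asbool_equiv_eqP idP (visibleP r_gt0 s_gt0)).
Qed.

End Visibility.

Theorem lemma3p9 (R : realType) (n : nat) (a : nat -> nat)
  (hn : (1 <= n)%N) (han : (0 < a n)%N)
  (hgcd : \big[gcdn/0%N]_(1 <= i < n.+1) a i = 1%N) (l : R) :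
  ((fun N : nat => (count_visible n a N)%:R / (N%:R ^+ 2) : R) @ \oo --> l)
  <->
  ((fun N : nat => incl_excl_sum R n a N / (N%:R ^+ 2)) @ \oo --> l).
Proof.
suff -> : (fun N : nat => (count_visible n a N)%:R / (N%:R ^+ 2) : R) =
          (fun N : nat => incl_excl_sum R n a N / (N%:R ^+ 2)) by [].
by apply: funext => N; rewrite (count_visibleE _ _ hn han).
Qed.
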